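(* Let $\mathbf v\in\mathbb{R}^\infty$, and let $\mathbf w=\mathbb{F}^{\rm F}\mathbf v$ and $\mathbf x=\mathbb{L}^{\rm F}\mathbf v$, where $\mathbb{F}^{\rm F}=\left(\frac{x}{1-x},\frac{x^2}{1-x}\right)$ and $\mathbb{L}^{\rm F}=\left(\frac{2-x}{1-x},\frac{x^2}{1-x}\right)$. Let $D=(1,-x)$, $\mathbb{F}^{\rm S}=(1,x(1+x))$, $\mathbb{L}^{\rm S}=(1+2x,x(1+x))$ and $C(x)=\frac{1-\sqrt{1-4x}}{2x}$. Then: (a) $\left(\frac{2-xC(x)}{xC(x)},xC(x)\right)\mathbf w=D(\mathbb{F}^{\rm S})^{-1}D\,\mathbf x$; (b) $\left(\frac{2-xC(x)}{xC(x)-2x^2C(x)^2},xC(x)\right)\mathbf w=D(\mathbb{L}^{\rm S})^{-1}D\,\mathbf x$; (c) $\left(\frac{xC(x)}{2-xC(x)},xC(x)\right)\mathbf x=D(\mathbb{F}^{\rm S})^{-1}D\,\mathbf w$; (d) $\left(\frac{xC(x)}{(1-2xC(x))(2-xC(x))},xC(x)\right)\mathbf x=D(\mathbb{L}^{\rm S})^{-1}D\,\mathbf w$.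
   Context: $\mathbb{R}^\infty$ is the space of real column vectors $[v_0,v_1,\ldots]^T$, identified with generating functions $V(x)=\sum_n v_nx^n$. For a formal power series $f(x)$ with $f(0)=0$ and a series $g(x)$, $(g(x),f(x))$ denotes the operator/infinite lower triangular matrix whose $j$-th column has generating function $g(x)f(x)^j$; it sends $\mathbf u$ with generating function $U(x)$ to the sequence with generating function $g(x)U(f(x))$. In (a) and (b) the first component $g$ is a formal Laurent series with a pole of order one at $x=0$; the product $g(x)W(xC(x))$ is nevertheless a formal power series because the generating function $W$ of $\mathbf w$ has zero constant term, and $(g,f)\mathbf w$ denotes the sequence with that generating function. Products of such matrices obey $(g,f)(h,l)=(g\cdot h(f),l(f))$, and for Riordan matrices ($g(0)\ne0$, $f'(0)\neq0$) inverses are $(g,f)^{-1}=(1/g(\bar f),\bar f)$ with $\bar f$ the compositional inverse of $f$. *)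

From HB Require Import structures.
From mathcomp Require Import all_boot all_order all_algebra.
From mathcomp Require Import reals.
Set Implicit Arguments. Unset Strict Implicit. Unset Printing Implicit Defensive.
Import Order.TTheory GRing.Theory Num.Theory.
Local Open Scope ring_scope.

(* Formal power series = coefficient sequences; also elements of R^\infty. *)
Definition series (R : realType) := nat -> R.

Section Series.
Variable R : realType.
Implicit Types a b : series R.

Definition sconst (c : R) : series R := fun n => if n == 0%N then c else 0.
Definition sone : series R := sconst 1.
Definition sX : series R := fun n => if n == 1%N then 1 else 0.
Definition sadd a b : series R := fun n => a n + b n.
Definition sopp a : series R := fun n => - a n.
Definition ssub a b : series R := fun n => a n - b n.
Definition sscale (c : R) a : series R := fun n => c * a n.
Definition smul a b : series R := fun n => \sum_(i < n.+1) a i * b (n - i)%N.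
Fixpoint spow a (k : nat) : series R :=
  match k with 0%N => sone | k'.+1 => smul a (spow a k') end.

Fixpoint build (step : seq R -> nat -> R) (n : nat) : seq R :=
  match n with
  | 0%N => [:: step [::] 0%N]
  | n'.+1 => let s := build step n' in rcons s (step s n)
  end.
Definition seq_of (step : seq R -> nat -> R) : series R :=
  fun n => nth 0 (build step n) n.

(* Solution u of the lower-triangular system A u = y (forward substitution);
   for A lower triangular with nonzero diagonal, u = A^{-1} y. *)
Definition tri_solve (A : nat -> nat -> R) (y : series R) : series R :=
  seq_of (fun s n => (y n - \sum_(j < n) A n j * nth 0 s j) / A n n).

(* multiplicative inverse of a series with nonzero constant term *)
Definition sinv a : series R :=
  tri_solve (fun n j => if (j <= n)%N then a (n - j)%N else 0) sone.
Definition sdiv a b : series R := smul a (sinv b).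

Definition sdivx a : series R := fun n => a n.+1.

(* square root of a series with constant term 1 (the one with constant term 1) *)
Definition ssqrt a : series R :=
  seq_of (fun s n => if n == 0%N then 1
     else (a n - \sum_(1 <= i < n) nth 0 s i * nth 0 s (n - i)%N) / 2).

(* Riordan array (g, f): entry (n,k) = [x^n] g f^k  (f(0) = 0 assumed) *)
Definition riordan_mat (g f : series R) : nat -> nat -> R :=
  fun n k => smul g (spow f k) n.
(* (g,f) u  has generating function g(x) U(f(x)) *)
Definition riordan (g f : series R) (u : series R) : series R :=
  fun n => \sum_(k < n.+1) u k * riordan_mat g f n k.
Definition riordan_inv (g f : series R) (y : series R) : series R :=
  tri_solve (riordan_mat g f) y.

(* Laurent first component g = N / Dn, where Dn(0) = 0 and (Dn/x)(0) <> 0,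
   so g = (N / (Dn/x)) / x has a simple pole at 0. For w with w_0 = 0,
   g(x) W(f(x)) = x^{-1} (N/(Dn/x))(x) W(f(x)), whose n-th coefficient
   is the (n+1)-th coefficient of (N/(Dn/x)) W(f). *)
Definition lriordan (N Dn f : series R) (w : series R) : series R :=
  fun n => riordan (sdiv N (sdivx Dn)) f w n.+1.

Definition FF_g : series R := sdiv sX (ssub sone sX).
Definition FF_f : series R := sdiv (smul sX sX) (ssub sone sX).
Definition LF_g : series R := sdiv (ssub (sconst 2) sX) (ssub sone sX).
Definition LF_f : series R := FF_f.
Definition FS_g : series R := sone.
Definition FS_f : series R := smul sX (sadd sone sX).
Definition LS_g : series R := sadd sone (sscale 2 sX).
Definition LS_f : series R := FS_f.
Definition Dop (u : series R) : series R := riordan sone (sopp sX) u.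

Definition catC : series R :=
  sdivx (sscale (2^-1) (ssub sone (ssqrt (ssub sone (sscale 4 sX))))).
Definition xC : series R := smul sX catC.

End Series.

(* Write c = x C(x); it is the power series root of c = x + c^2 with zero
   constant term.  Since -x is the root of y = h + y^2 for h = -x(1+x),
   uniqueness of that root gives c(h) = -x.  On the other hand, for a Riordan
   array (g, f) with f = x(1+x), the series L = D (g, f)^{-1} D y is the unique
   solution of g(x) L(-f(x)) = y(-x).  So every identity, after substituting h
   into its left-hand side, reduces to x X(x) = (2 - x) W(x), which holds since
   F^F and L^F share the second component x^2/(1-x).  Products and
   composition of formal power series are checked on polynomial truncations
   modulo x^N. *)

From HB Require Import structures.
From mathcomp Require Import all_boot all_order all_algebra.
From mathcomp Require Import reals boolp.
From mathcomp Require Import ring lra.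
Set Implicit Arguments. Unset Strict Implicit. Unset Printing Implicit Defensive.
Import Order.TTheory GRing.Theory Num.Theory.
Local Open Scope ring_scope.

Section TakePoly.
Variable R : comNzRingType.
Implicit Types p q : {poly R}.

Lemma take_poly_idem N p : take_poly N (take_poly N p) = take_poly N p.
Proof. exact/take_poly_id/size_take_poly. Qed.

Lemma take_polyMl N p q : take_poly N (take_poly N p * q) = take_poly N (p * q).
Proof.
by rewrite -{2}(poly_take_drop N p) mulrDl mulrAC take_polyD take_polyMXn_0 addr0.
Qed.

Lemma take_polyMr N p q : take_poly N (p * take_poly N q) = take_poly N (p * q).
Proof. by rewrite mulrC take_polyMl mulrC. Qed.

Lemma drop_poly1_mulX q : q`_0 = 0 -> drop_poly 1 q * 'X = q.
Proof.
move=> q0; rewrite -[RHS](poly_take_drop 1) expr1 -[LHS]add0r; congr (_ + _).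
by apply/polyP => i; rewrite coef_take_poly coef0; case: i => [|[]].
Qed.

Lemma take_poly_compl N p q : q`_0 = 0 ->
  take_poly N (take_poly N p \Po q) = take_poly N (p \Po q).
Proof.
move=> q0; rewrite -{2}(poly_take_drop N p) comp_polyD comp_polyM.
rewrite (rmorphXn (comp_poly q)) /= comp_polyX.
by rewrite -(drop_poly1_mulX q0) exprMn mulrA take_polyD take_polyMXn_0 addr0.
Qed.

Lemma take_poly_compr N p q :
  take_poly N (p \Po take_poly N q) = take_poly N (p \Po q).
Proof.
elim/poly_ind: p => [|p c IHp]; first by rewrite !comp_poly0.
rewrite !comp_poly_MXaddC !take_polyD; congr (_ + _).
by rewrite -take_polyMl IHp take_polyMl -take_polyMr take_poly_idem take_polyMr.
Qed.

Lemma comp_poly_widen N p q : (size p <= N)%N ->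
  p \Po q = \sum_(k < N) p`_k *: q ^+ k.
Proof.
move=> size_p; rewrite comp_polyE (big_ord_widen N (fun k => p`_k *: q ^+ k) size_p).
rewrite big_mkcond; apply: eq_bigr => k _; case: ifP => // /negbT.
by rewrite -leqNgt => /(nth_default 0) ->; rewrite scale0r.
Qed.

Lemma coefM_exp_lt p q k i : p`_0 = 0 -> (i < k)%N ->
  (q * p ^+ k)`_i = 0.
Proof. by move=> p0 ik; rewrite -(drop_poly1_mulX p0) exprMn mulrA coefMXn ik. Qed.

End TakePoly.

Section CourseOfValues.
Variable R : realType.
Implicit Types (step : seq R -> nat -> R) (A : nat -> nat -> R) (y u : series R).

Lemma size_build step n : size (build step n) = n.+1.
Proof. by elim: n => [|n IH] //=; rewrite size_rcons IH. Qed.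

Lemma nth_build step n i : (i <= n)%N -> nth 0 (build step n) i = seq_of step i.
Proof.
elim: n => [|n IH]; first by rewrite leqn0 => /eqP ->.
rewrite leq_eqVlt => /orP[/eqP -> //|lt_in].
by rewrite /= nth_rcons size_build lt_in IH.
Qed.

Lemma seq_ofE step n :
  (forall s s' m, (forall j, (j < m)%N -> nth 0 s j = nth 0 s' j) ->
     step s m = step s' m) ->
  seq_of step n = step (mkseq (seq_of step) n) n.
Proof.
move=> step_local; case: n => [//|n].
rewrite /seq_of /= nth_rcons size_build ltnn eqxx.
by apply: step_local => j lt_jn; rewrite nth_mkseq // nth_build.
Qed.

Lemma tri_solveE A y n :
  tri_solve A y n = (y n - \sum_(j < n) A n j * tri_solve A y j) / A n n.
Proof.
rewrite /tri_solve seq_ofE => [|s s' m eq_ss']; congr ((_ - _) / _);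
  by apply: eq_bigr => j _; rewrite ?nth_mkseq ?eq_ss'.
Qed.

Lemma tri_solve_sum A y n : A n n != 0 ->
  \sum_(j < n.+1) A n j * tri_solve A y j = y n.
Proof.
move=> Ann; rewrite big_ord_recr /= [tri_solve A y n]tri_solveE.
by rewrite mulrC divfK // subrKC.
Qed.

Lemma tri_solve_uniq A y u : (forall n, A n n != 0) ->
  (forall n, \sum_(j < n.+1) A n j * u j = y n) -> tri_solve A y = u.
Proof.
move=> Adiag Au; apply: funext; elim/ltn_ind => n IH.
have := tri_solve_sum y (Adiag n); rewrite -Au !big_ord_recr /=.
rewrite (eq_bigr (fun j : 'I_n => A n j * u j)) => [|j _]; last by rewrite IH.
by move/addrI/(mulfI (Adiag n)).
Qed.

Lemma mul_sinv (a : series R) : a 0%N != 0 -> smul (sinv a) a = @sone R.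
Proof.
move=> a0; apply: funext => n.
pose A n j := if (j <= n)%N then a (n - j)%N else 0.
rewrite -(@tri_solve_sum A (@sone R) n); last by rewrite /A leqnn subnn.
by rewrite /smul; apply: eq_bigr => -[i /= lt_in] _; rewrite /A -ltnS lt_in mulrC.
Qed.

Lemma ssqrtE (a : series R) n : (0 < n)%N ->
  ssqrt a n = (a n - \sum_(1 <= i < n) ssqrt a i * ssqrt a (n - i)%N) / 2.
Proof.
have subn_lt i : (1 <= i < n -> n - i < n)%N.
  by case/andP => i_gt0 /ltnW; rewrite ltn_subrL i_gt0 => /(leq_trans i_gt0).
case: n subn_lt => // n subn_lt _; rewrite /ssqrt seq_ofE /=; last first.
  move=> s s' [//|m] eq_ss'; congr ((_ - _) / _).
  apply: eq_big_nat => i /andP[i_gt0 i_lt].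
  by rewrite !eq_ss' // ltn_subrL i_gt0 (leq_trans i_gt0 (ltnW i_lt)).
congr ((_ - _) / _); apply: eq_big_nat => i i_in.
by rewrite !nth_mkseq ?subn_lt //; case/andP: i_in.
Qed.

End CourseOfValues.

Section Truncation.
Variable R : realType.
Implicit Types (a b f g u : series R) (p : {poly R}).

Definition strunc N a : {poly R} := \poly_(i < N) a i.

Lemma coef_strunc N a i : (strunc N a)`_i = if (i < N)%N then a i else 0.
Proof. exact: coef_poly. Qed.

Lemma strunc_inj a b : (forall N, strunc N a = strunc N b) -> a = b.
Proof.
move=> eq_ab; apply: funext => n.
by have := congr1 (fun p : {poly R} => p`_n) (eq_ab n.+1); rewrite !coef_strunc ltnSn.
Qed.

Lemma strunc_take N a p : (forall i, (i < N)%N -> a i = p`_i) ->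
  strunc N a = take_poly N p.
Proof.
move=> eq_ap; apply/polyP => i.
by rewrite coef_strunc coef_take_poly; case: ifP => // /eq_ap.
Qed.

Lemma take_strunc N a : take_poly N (strunc N a) = strunc N a.
Proof. exact/take_poly_id/size_poly. Qed.

Lemma strunc_sadd N a b : strunc N (sadd a b) = strunc N a + strunc N b.
Proof. by apply/polyP => i; rewrite coefD !coef_strunc; case: ifP; rewrite ?addr0. Qed.

Lemma strunc_sscale N k a : strunc N (sscale k a) = k *: strunc N a.
Proof. by apply/polyP => i; rewrite coefZ !coef_strunc; case: ifP; rewrite ?mulr0. Qed.

Lemma strunc_sconst N k : strunc N (sconst k) = take_poly N k%:P.
Proof. by apply: strunc_take => -[|i] _; rewrite coefC. Qed.

Lemma strunc_sX N : strunc N (@sX R) = take_poly N 'X.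
Proof. by apply: strunc_take => i _; rewrite coefX /sX; case: (i == 1)%N. Qed.

Lemma strunc_smul N a b :
  strunc N (smul a b) = take_poly N (strunc N a * strunc N b).
Proof.
apply: strunc_take => i iN; rewrite coefM; apply: eq_bigr => -[j /= ji] _.
rewrite !coef_strunc (leq_ltn_trans (ji : (j <= i)%N) iN).
by rewrite (leq_ltn_trans (leq_subr j i) iN).
Qed.

Lemma strunc_spow N f k : strunc N (spow f k) = take_poly N (strunc N f ^+ k).
Proof.
elim: k => [|k IH] /=; first by rewrite strunc_sconst.
by rewrite strunc_smul IH take_polyMr -exprS.
Qed.

Lemma coef_strunc_riordan_mat N g f n k : (n < N)%N ->
  riordan_mat g f n k = (strunc N g * strunc N f ^+ k)`_n.
Proof.
move=> nN; rewrite /riordan_mat -[LHS](@ifT _ (n < N)%N _ 0) // -coef_strunc.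
by rewrite strunc_smul strunc_spow take_polyMr coef_take_poly nN.
Qed.

Lemma strunc_riordan N g f u : f 0%N = 0 ->
  strunc N (riordan g f u) = take_poly N (strunc N g * (strunc N u \Po strunc N f)).
Proof.
move=> f0; apply: strunc_take => i iN.
have sf0 : (strunc N f)`_0 = 0 by rewrite coef_strunc f0; case: ifP.
rewrite (comp_poly_widen _ (size_poly N u)) mulr_sumr coef_sum /riordan.
rewrite (big_ord_widen N (fun k => u k * riordan_mat g f i k) iN) big_mkcond.
apply: eq_bigr => k _; rewrite -scalerAr coefZ coef_strunc ltn_ord.
case: ltnP => [ki | ik]; first by rewrite (coef_strunc_riordan_mat _ _ _ iN).
by rewrite coefM_exp_lt ?mulr0.
Qed.

Lemma riordan_mat_diag g f n : f 0%N = 0 ->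
  riordan_mat g f n n = g 0%N * f 1%N ^+ n.
Proof.
move=> f0; rewrite (coef_strunc_riordan_mat _ _ _ (leqnSn n.+1)).
have sf0 : (strunc n.+2 f)`_0 = 0 by rewrite coef_strunc f0.
rewrite -(drop_poly1_mulX sf0) exprMn mulrA coefMXn ltnn subnn coef0M.
have coef0X (p : {poly R}) : (p ^+ n)`_0 = p`_0 ^+ n by exact: (rmorphXn (coefp 0)).
by rewrite coef0X coef_drop_poly !coef_strunc.
Qed.

End Truncation.

Section FormalPowerSeries.
Variable R : realType.

(* A fresh type, so that its product is the Cauchy product rather than a
   pointwise one. *)
Record fps := Fps { coefs : series R }.

Lemma coefs_inj : injective coefs. Proof. by move=> [a] [b] /= ->. Qed.

Lemma Fps_inj : injective Fps. Proof. by move=> a b []. Qed.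

Lemma fps_truncP (a b : fps) :
  (forall N, strunc N (coefs a) = strunc N (coefs b)) -> a = b.
Proof. by move/strunc_inj/coefs_inj. Qed.

HB.instance Definition _ := gen_eqMixin fps.
HB.instance Definition _ := gen_choiceMixin fps.

Definition fps_zero := Fps (fun=> 0).
Definition fps_opp (a : fps) := Fps (sopp (coefs a)).
Definition fps_add (a b : fps) := Fps (sadd (coefs a) (coefs b)).
Definition fps_one := Fps (@sone R).
Definition fps_mul (a b : fps) := Fps (smul (coefs a) (coefs b)).

Fact fps_addA : associative fps_add.
Proof. by move=> a b c; congr Fps; apply: funext => n; apply: addrA. Qed.

Fact fps_addC : commutative fps_add.
Proof. by move=> a b; congr Fps; apply: funext => n; apply: addrC. Qed.

Fact fps_add0 : left_id fps_zero fps_add.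
Proof. by move=> [a]; congr Fps; apply: funext => n; apply: add0r. Qed.

Fact fps_addN : left_inverse fps_zero fps_opp fps_add.
Proof. by move=> a; congr Fps; apply: funext => n; apply: addNr. Qed.

HB.instance Definition _ :=
  GRing.isZmodule.Build fps fps_addA fps_addC fps_add0 fps_addN.

Fact fps_mulA : associative fps_mul.
Proof.
move=> a b c; apply: fps_truncP => N /=.
by rewrite !strunc_smul take_polyMl take_polyMr mulrA.
Qed.

Fact fps_mulC : commutative fps_mul.
Proof. by move=> a b; apply: fps_truncP => N /=; rewrite !strunc_smul mulrC. Qed.

Fact fps_mul1 : left_id fps_one fps_mul.
Proof.
move=> a; apply: fps_truncP => N /=.
by rewrite strunc_smul strunc_sconst take_polyMl mul1r take_strunc.
Qed.

Fact fps_mulDl : left_distributive fps_mul fps_add.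
Proof.
move=> a b c; apply: fps_truncP => N /=.
by rewrite strunc_smul !strunc_sadd mulrDl take_polyD -!strunc_smul.
Qed.

Fact fps_one_neq0 : fps_one != fps_zero.
Proof. by apply/eqP => /(congr1 (coefs^~ 0%N))/eqP; rewrite oner_eq0. Qed.

HB.instance Definition _ := GRing.Zmodule_isComNzRing.Build fps
  fps_mulA fps_mulC fps_mul1 fps_mulDl fps_one_neq0.

Lemma strunc_add N (a b : fps) :
  strunc N (coefs (a + b)) = strunc N (coefs a) + strunc N (coefs b).
Proof. exact: strunc_sadd. Qed.

Lemma strunc_mul N (a b : fps) : strunc N (coefs (a * b))
  = take_poly N (strunc N (coefs a) * strunc N (coefs b)).
Proof. exact: strunc_smul. Qed.

Lemma Fps_sadd (a b : series R) : Fps (sadd a b) = Fps a + Fps b. Proof. by []. Qed.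
Lemma Fps_ssub (a b : series R) : Fps (ssub a b) = Fps a - Fps b. Proof. by []. Qed.
Lemma Fps_smul (a b : series R) : Fps (smul a b) = Fps a * Fps b. Proof. by []. Qed.
Lemma Fps_sone : Fps (@sone R) = 1. Proof. by []. Qed.

Definition cterm (a : fps) : R := coefs a 0%N.

Lemma cterm_Fps (a : series R) : cterm (Fps a) = a 0%N. Proof. by []. Qed.

Fact cterm_is_nmod_morphism : nmod_morphism cterm.
Proof. by []. Qed.

Fact cterm_is_monoid_morphism : monoid_morphism cterm.
Proof. by split=> // a b; rewrite /cterm /= /smul big_ord1. Qed.

HB.instance Definition _ := GRing.isNmodMorphism.Build fps R cterm
  cterm_is_nmod_morphism.
HB.instance Definition _ := GRing.isMonoidMorphism.Build fps R cterm
  cterm_is_monoid_morphism.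

Definition fps_unit : {pred fps} := fun a => cterm a != 0.
Definition fps_inv (a : fps) :=
  if cterm a != 0 then Fps (sinv (coefs a)) else a.

Fact fps_mulVr : {in fps_unit, left_inverse 1 fps_inv *%R}.
Proof. by move=> a a0; rewrite /fps_inv ifT //; apply/coefs_inj/mul_sinv. Qed.

Fact fps_unitPl (a b : fps) : b * a = 1 -> fps_unit a.
Proof.
move/(congr1 cterm); rewrite rmorphM rmorph1 /= => ba1.
by apply/eqP => a0; move: ba1; rewrite a0 mulr0 => /eqP; rewrite eq_sym oner_eq0.
Qed.

Fact fps_inv_out : {in [predC fps_unit], fps_inv =1 id}.
Proof. by move=> a; rewrite inE => /negPf a0; rewrite /fps_inv ifF. Qed.

HB.instance Definition _ := GRing.ComNzRing_hasMulInverse.Build fps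
  fps_mulVr fps_unitPl fps_inv_out.

Lemma unit_fpsE (a : fps) : (a \is a GRing.unit) = (cterm a != 0).
Proof. by []. Qed.

Lemma Fps_sdiv (a b : series R) : Fps b \is a GRing.unit ->
  Fps (sdiv a b) = Fps a / Fps b.
Proof. by move=> Ub; rewrite /GRing.inv /= /fps_inv ifT. Qed.

Definition fpsC (k : R) : fps := Fps (sconst k).

Lemma Fps_sconst k : Fps (sconst k) = fpsC k. Proof. by []. Qed.

Lemma Fps_sscale k (a : series R) : Fps (sscale k a) = fpsC k * Fps a.
Proof.
apply: fps_truncP => N /=.
rewrite strunc_smul strunc_sconst take_polyMl mul_polyC take_polyZ.
by rewrite take_strunc strunc_sscale.
Qed.

Fact fpsC_is_nmod_morphism : nmod_morphism fpsC.
Proof.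
split=> [|k l]; first by congr Fps; apply: funext => -[].
by congr Fps; apply: funext => -[|n] /=; rewrite /sadd /sconst /= ?addr0.
Qed.

Fact fpsC_is_monoid_morphism : monoid_morphism fpsC.
Proof.
split=> // k l; rewrite -Fps_sscale; congr Fps.
by apply: funext => -[|n]; rewrite /sscale /sconst /= ?mulr0.
Qed.

HB.instance Definition _ := GRing.isNmodMorphism.Build R fps fpsC
  fpsC_is_nmod_morphism.
HB.instance Definition _ := GRing.isMonoidMorphism.Build R fps fpsC
  fpsC_is_monoid_morphism.

Definition fpsX : fps := Fps (@sX R).

Lemma cterm_fpsX : cterm fpsX = 0. Proof. by []. Qed.

Lemma cterm_fpsXM a : cterm (fpsX * a) = 0.
Proof. by rewrite rmorphM /= mul0r. Qed.

Lemma coefs_Xmul a n : coefs (fpsX * a) n = if n is m.+1 then coefs a m else 0.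
Proof.
have := congr1 (fun p : {poly R} => p`_n) (strunc_smul n.+2 (@sX R) (coefs a)).
rewrite coef_strunc ltnW // strunc_sX take_polyMl coef_take_poly ltnW // coefXM.
by case: n => [|n] //=; rewrite coef_strunc ltnW.
Qed.

Lemma mulfpsXI : injective (GRing.mul fpsX).
Proof.
move=> a b eq_ab; apply/coefs_inj/funext => n.
by rewrite -(coefs_Xmul a n.+1) eq_ab coefs_Xmul.
Qed.

Lemma fpsX_sdivx a : cterm a = 0 -> fpsX * Fps (sdivx (coefs a)) = a.
Proof. by move=> a0; apply: coefs_inj; apply: funext => -[|n]; rewrite coefs_Xmul. Qed.

End FormalPowerSeries.

Arguments cterm {R} a : simpl never.

Section Composition.
Variable R : realType.
Local Notation fps := (fps R).
Implicit Types u f g : fps.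

Definition fcomp u f : fps := Fps (riordan (@sone R) (coefs f) (coefs u)).

Lemma coef0_strunc N f : cterm f = 0 -> (strunc N (coefs f))`_0 = 0.
Proof. by move=> f0; rewrite coef_strunc; case: ifP. Qed.

Lemma strunc_fcomp N u f : cterm f = 0 -> strunc N (coefs (fcomp u f))
  = take_poly N (strunc N (coefs u) \Po strunc N (coefs f)).
Proof. by move=> f0; rewrite strunc_riordan // strunc_sconst take_polyMl mul1r. Qed.

Lemma cterm_fcomp u f : cterm (fcomp u f) = cterm u.
Proof. by rewrite /cterm /= /riordan big_ord1 /riordan_mat /smul big_ord1 /= !mulr1. Qed.

Lemma riordanE (g f u : series R) : f 0%N = 0 ->
  Fps (riordan g f u) = Fps g * fcomp (Fps u) (Fps f).
Proof.
move=> f0; apply: fps_truncP => N.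
by rewrite strunc_riordan // strunc_mul strunc_fcomp // take_polyMr.
Qed.

Lemma fcomp_fpsX u : fcomp u (fpsX R) = u.
Proof.
apply: fps_truncP => N; rewrite strunc_fcomp // strunc_sX take_poly_compr.
by rewrite comp_polyXr take_strunc.
Qed.

Lemma fcompA u f g : cterm f = 0 -> cterm g = 0 ->
  fcomp (fcomp u f) g = fcomp u (fcomp f g).
Proof.
move=> f0 g0; have fg0 : cterm (fcomp f g) = 0 by rewrite cterm_fcomp.
apply: fps_truncP => N; rewrite !strunc_fcomp // take_poly_compl ?coef0_strunc //.
by rewrite take_poly_compr comp_polyA.
Qed.

Section CompositionMorphism.
Variable f : fps.
Hypothesis f0 : cterm f = 0.

Lemma fcompD u v : fcomp (u + v) f = fcomp u f + fcomp v f.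
Proof.
apply: fps_truncP => N; rewrite strunc_add !strunc_fcomp //.
by rewrite strunc_add comp_polyD take_polyD.
Qed.

Lemma fcompC k : fcomp (fpsC k) f = fpsC k.
Proof.
apply: fps_truncP => N; rewrite strunc_fcomp //= strunc_sconst.
by rewrite take_poly_compl ?coef0_strunc // comp_polyC.
Qed.

Lemma fcomp1 : fcomp 1 f = 1.
Proof. exact: fcompC 1. Qed.

Lemma fcomp_nat n : fcomp n%:R f = n%:R.
Proof. by rewrite -(rmorph_nat (@fpsC R)) fcompC. Qed.

Lemma fcompN u : fcomp (- u) f = - fcomp u f.
Proof.
apply/eqP; rewrite -addr_eq0 -fcompD addNr.
by rewrite -(rmorph0 (@fpsC R)) fcompC.
Qed.

Lemma fcompB u v : fcomp (u - v) f = fcomp u f - fcomp v f.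
Proof. by rewrite fcompD fcompN. Qed.

Lemma fcompM u v : fcomp (u * v) f = fcomp u f * fcomp v f.
Proof.
apply: fps_truncP => N; rewrite strunc_mul !strunc_fcomp //.
rewrite strunc_mul take_poly_compl ?coef0_strunc // take_polyMl take_polyMr.
by rewrite comp_polyM.
Qed.

Lemma fcompX : fcomp (fpsX R) f = f.
Proof.
apply: fps_truncP => N; rewrite strunc_fcomp //= strunc_sX.
by rewrite take_poly_compl ?coef0_strunc // comp_polyX take_strunc.
Qed.

Lemma fcompV u : u \is a GRing.unit -> fcomp u^-1 f = (fcomp u f)^-1.
Proof. by move=> Uu; symmetry; apply: mulr1_eq; rewrite -fcompM mulrV // fcomp1. Qed.

End CompositionMorphism.

End Composition.

Section Catalan.
Variable R : realType.
Local Notation fps := (fps R).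
Local Notation x := (fpsX R).
Local Notation c := (Fps (@xC R)).

Lemma Fps_ssqrt (a : series R) : a 0%N = 1 -> Fps (ssqrt a) ^+ 2 = Fps a.
Proof.
move=> a0; apply/coefs_inj/funext => -[|n] /=.
  by rewrite /smul big_ord1 /= a0 mulr1.
rewrite /smul -(big_mkord xpredT (fun i => ssqrt a i * ssqrt a (n.+1 - i)%N)).
rewrite big_ltn // big_nat_recr //= subn0 subnn (ssqrtE a (ltn0Sn n)).
have -> : ssqrt a 0 = 1 by [].
lra.
Qed.

Lemma xC_quadratic : c = x + c * c.
Proof.
pose S := Fps (ssqrt (ssub (@sone R) (sscale 4 (@sX R)))).
have S2 : S ^+ 2 = 1 - 4 * x.
  rewrite Fps_ssqrt; last by rewrite /ssub /sscale /sone /sconst /sX /= mulr0 subr0.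
  by rewrite Fps_ssub Fps_sone Fps_sscale rmorph_nat.
have U2 : (2 : fps) \is a GRing.unit by rewrite unit_fpsE rmorph_nat pnatr_eq0.
pose T := Fps (sscale 2^-1 (ssub (@sone R) (coefs S))).
have -> : c = 2^-1 * (1 - S).
  rewrite -[c]/(x * Fps (sdivx (coefs T))) fpsX_sdivx; last first.
    by rewrite /cterm /= /sscale /ssub subrr mulr0.
  by rewrite /T Fps_sscale fmorphV rmorph_nat.
set h := 2^-1.
(* The difference of the two sides is a combination of [h * 2 - 1] and of
   [S ^+ 2 - (1 - 4 * x)]. *)
have h2 : h * 2 = 1 by rewrite mulVr.
have -> : x + h * (1 - S) * (h * (1 - S)) = h * (1 - S)
    + (1 - (h * 2) ^+ 2) * x + h * (h * 2 - 1) * (1 - S)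
    + h ^+ 2 * (S ^+ 2 - (1 - 4 * x)) by ring.
by rewrite h2 S2 expr1n !subrr !(mulr0, mul0r, addr0).
Qed.

Lemma cterm_xC : cterm c = 0.
Proof. by rewrite -[c]/(x * Fps (@catC R)) cterm_fpsXM. Qed.

Lemma catC0 : @catC R 0%N = 1.
Proof.
pose C := Fps (@catC R); have cE : c = x * C by [].
have : C = 1 + C * (x * C).
  by apply: (@mulfpsXI R); rewrite -cE {1}xC_quadratic cE; ring.
by move/(congr1 cterm); rewrite rmorphD rmorph1 rmorphM /= cterm_fpsXM mulr0 addr0.
Qed.

Lemma sdivx_xC : sdivx (@xC R) = @catC R.
Proof.
apply: Fps_inj; apply: (@mulfpsXI R).
by rewrite -[x * Fps (@catC R)]/c -[xC R]/(coefs c) fpsX_sdivx // cterm_xC.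
Qed.

Lemma quadratic_uniq (h y z : fps) : cterm y = 0 -> cterm z = 0 ->
  y = h + y * y -> z = h + z * z -> y = z.
Proof.
move=> y0 z0 yE zE; apply/eqP; rewrite -subr_eq0; apply/eqP.
have U : 1 - y - z \is a GRing.unit.
  by rewrite unit_fpsE !rmorphB rmorph1 /= y0 z0 !subr0 oner_eq0.
apply: (mulrI U); rewrite mulr0.
transitivity ((y - (h + y * y)) - (z - (h + z * z))); first by ring.
by rewrite -yE -zE !subrr.
Qed.

Lemma fcomp_xC : fcomp c (- (x * (1 + x))) = - x.
Proof.
have h0 : cterm (- (x * (1 + x))) = 0 by rewrite rmorphN /= cterm_fpsXM oppr0.
apply: (quadratic_uniq (h := - (x * (1 + x)))); last 1 first.
- by ring.
- by rewrite cterm_fcomp cterm_xC.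
- by rewrite rmorphN /= cterm_fpsX oppr0.
by rewrite {1}xC_quadratic fcompD // fcompX // fcompM.
Qed.

End Catalan.

Section ConjugatedRiordanInverse.
Variable R : realType.
Local Notation x := (fpsX R).

Lemma cterm_oppX : cterm (- x) = 0.
Proof. by rewrite rmorphN /= cterm_fpsX oppr0. Qed.

Lemma Dop_fcomp (u : series R) : Fps (Dop u) = fcomp (Fps u) (- x).
Proof. by rewrite /Dop riordanE ?mul1r // /sopp /sX /= oppr0. Qed.

Lemma DopK : involutive (@Dop R).
Proof.
move=> u; apply: Fps_inj; rewrite !Dop_fcomp fcompA ?cterm_oppX //.
by rewrite fcompN ?fcompX ?cterm_oppX // opprK fcomp_fpsX.
Qed.

Lemma riordan_inv_eq (g f y u : series R) :
  (forall n, riordan_mat g f n n != 0) -> riordan g f u = y -> riordan_inv g f y = u.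
Proof.
move=> diag_neq0 <-; apply: tri_solve_uniq => // n.
by apply: eq_bigr => j _; rewrite mulrC.
Qed.

Lemma Dop_riordan_inv (g f y L : series R) :
  g 0%N != 0 -> f 0%N = 0 -> f 1%N != 0 ->
  Fps g * fcomp (Fps L) (- Fps f) = fcomp (Fps y) (- x) ->
  L = Dop (riordan_inv g f (Dop y)).
Proof.
move=> g0 f0 f1 eqL; rewrite (@riordan_inv_eq _ _ _ (Dop L)) ?DopK // => [n|].
  by rewrite riordan_mat_diag // mulf_neq0 // expf_neq0.
apply: Fps_inj; rewrite riordanE // !Dop_fcomp -eqL fcompA ?cterm_oppX //.
by rewrite fcompN // fcompX.
Qed.

Lemma lriordanE (N Dn f w : series R) : f 0%N = 0 -> w 0%N = 0 ->
  x * Fps (lriordan N Dn f w) = Fps (sdiv N (sdivx Dn)) * fcomp (Fps w) (Fps f).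
Proof.
move=> f0 w0; rewrite -(riordanE _ _ f0).
apply: (fpsX_sdivx (a := Fps (riordan _ f w))).
by rewrite riordanE // rmorphM /= cterm_fcomp !cterm_Fps w0 mulr0.
Qed.

End ConjugatedRiordanInverse.

Section PaperArrays.
Variable R : realType.
Local Notation x := (fpsX R).

Lemma unit_1subX : 1 - x \is a GRing.unit.
Proof. by rewrite unit_fpsE rmorphB rmorph1 /= cterm_fpsX subr0 oner_eq0. Qed.

Lemma unit_2addX : 2 + x \is a GRing.unit.
Proof. by rewrite unit_fpsE rmorphD rmorph_nat /= cterm_fpsX addr0 pnatr_eq0. Qed.

Lemma cterm_oppXM1addX : cterm (- (x * (1 + x))) = 0.
Proof. by rewrite rmorphN /= cterm_fpsXM oppr0. Qed.

Lemma FF_gE : Fps (@FF_g R) = x / (1 - x).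
Proof. exact: Fps_sdiv unit_1subX. Qed.

Lemma FF_fE : Fps (@FF_f R) = x * x / (1 - x).
Proof. exact: Fps_sdiv unit_1subX. Qed.

Lemma FF_f0 : @FF_f R 0%N = 0.
Proof. by rewrite -cterm_Fps FF_fE -mulrA cterm_fpsXM. Qed.

Lemma LF_gE : Fps (@LF_g R) = (2 - x) / (1 - x).
Proof. by rewrite [LHS](Fps_sdiv _ unit_1subX) Fps_ssub Fps_sconst rmorph_nat. Qed.

Lemma FS_fE : Fps (@FS_f R) = x * (1 + x). Proof. by []. Qed.

Lemma FS_f0 : @FS_f R 0%N = 0.
Proof. by rewrite -cterm_Fps FS_fE cterm_fpsXM. Qed.

Lemma FS_f1 : @FS_f R 1%N = 1.
Proof.
rewrite -[FS_f R]/(coefs (x * (1 + x))) coefs_Xmul.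
by rewrite /= /sadd /sone /sconst /sX /= addr0.
Qed.

Lemma LS_gE : Fps (@LS_g R) = 1 + 2 * x.
Proof. by rewrite Fps_sadd Fps_sone Fps_sscale rmorph_nat. Qed.

Lemma LS_g0 : @LS_g R 0%N != 0.
Proof.
rewrite -cterm_Fps LS_gE rmorphD rmorph1 /= rmorphM /= cterm_fpsX.
by rewrite mulr0 addr0 oner_eq0.
Qed.

End PaperArrays.

Section Theorem4p3.
Variables (R : realType) (v : series R).
Local Notation x := (fpsX R).
Local Notation c := (Fps (@xC R)).
Local Notation h := (- (x * (1 + x))).
Local Notation w := (riordan (@FF_g R) (@FF_f R) v).
Local Notation xv := (riordan (@LF_g R) (@LF_f R) v).

Lemma LF_FF_rel : x * Fps xv = (2 - x) * Fps w.
Proof. by rewrite /LF_f !riordanE ?FF_f0 // LF_gE FF_gE; ring. Qed.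

Lemma cterm_w : cterm (Fps w) = 0.
Proof. by rewrite riordanE ?FF_f0 // FF_gE -!mulrA cterm_fpsXM. Qed.

Lemma LF_FF_rel_opp :
  - x * fcomp (Fps xv) (- x) = (2 + x) * fcomp (Fps w) (- x).
Proof.
have := congr1 (fun u => fcomp u (- x)) LF_FF_rel.
by rewrite /= !fcompM ?cterm_oppX // fcompB ?fcomp_nat ?fcompX ?cterm_oppX // opprK.
Qed.

Lemma riordan_xC_subst (q : series R) : Fps q \is a GRing.unit ->
  fcomp (Fps (riordan (sdiv (@xC R) q) (@xC R) xv)) h * fcomp (Fps q) h
    = (2 + x) * fcomp (Fps w) (- x).
Proof.
have h0 := cterm_oppXM1addX R; move=> Uq.
have Uqh : fcomp (Fps q) h \is a GRing.unit by rewrite unit_fpsE cterm_fcomp.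
rewrite (riordanE (sdiv _ q) _ (cterm_xC R)) Fps_sdiv // !fcompM //.
rewrite fcompA ?cterm_xC // fcomp_xC fcompV //.
by rewrite mulrAC divrK // LF_FF_rel_opp.
Qed.

Lemma lriordan_xC_subst (Dn : series R) :
  Dn 0%N = 0 -> Fps (sdivx Dn) \is a GRing.unit ->
  fcomp (Fps (lriordan (ssub (sconst 2) (@xC R)) Dn (@xC R) w)) h
    * fcomp (Fps Dn) h = - x * fcomp (Fps xv) (- x).
Proof.
have h0 := cterm_oppXM1addX R; move=> Dn0 UE.
have UEh : fcomp (Fps (sdivx Dn)) h \is a GRing.unit.
  by rewrite unit_fpsE cterm_fcomp.
have := congr1 (fun u => fcomp u h)
  (@lriordanE R (ssub (sconst 2) (@xC R)) Dn (@xC R) w (cterm_xC R) cterm_w).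
rewrite !fcompM // fcompX // Fps_sdiv // fcompM // fcompV // fcompA ?cterm_xC //.
rewrite fcomp_xC Fps_ssub fcompB // Fps_sconst rmorph_nat fcomp_nat //.
rewrite fcomp_xC opprK => hL.
rewrite -(fpsX_sdivx (a := Fps Dn) Dn0) fcompM // fcompX // -[coefs (Fps Dn)]/Dn.
by rewrite mulrA [_ * h]mulrC hL mulrAC divrK // LF_FF_rel_opp.
Qed.

Lemma theorem4p3_a : lriordan (ssub (sconst 2) (@xC R)) (@xC R) (@xC R) w
  = Dop (riordan_inv (@FS_g R) (@FS_f R) (Dop xv)).
Proof.
apply: Dop_riordan_inv; rewrite ?FS_f0 ?FS_f1 ?oner_eq0 // FS_fE Fps_sone mul1r.
have := @lriordan_xC_subst (xC R) (cterm_xC R).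
rewrite sdivx_xC unit_fpsE cterm_Fps catC0 oner_eq0 fcomp_xC => /(_ isT) subst_a.
apply: (@mulfpsXI R); apply: oppr_inj.
by rewrite -mulNr -[RHS]mulNr -subst_a mulrC.
Qed.

Lemma theorem4p3_b : lriordan (ssub (sconst 2) (@xC R))
    (ssub (@xC R) (sscale 2 (smul (@xC R) (@xC R)))) (@xC R) w
  = Dop (riordan_inv (@LS_g R) (@LS_f R) (Dop xv)).
Proof.
have h0 := cterm_oppXM1addX R; set Dn := ssub (@xC R) _.
have DnE : Fps Dn = c - 2 * (c * c) by rewrite /Dn Fps_ssub Fps_sscale rmorph_nat.
have Dn0 : Dn 0%N = 0.
  by rewrite -cterm_Fps DnE rmorphB !rmorphM /= cterm_xC mul0r mulr0 subr0.
have UE : Fps (sdivx Dn) \is a GRing.unit.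
  have -> : Fps (sdivx Dn) = Fps (@catC R) * (1 - 2 * c).
    apply: (@mulfpsXI R); rewrite (fpsX_sdivx (a := Fps Dn) Dn0) DnE.
    by rewrite -[c]/(x * Fps (@catC R)); ring.
  rewrite unit_fpsE rmorphM rmorphB rmorph1 rmorphM /= cterm_xC cterm_Fps catC0.
  by rewrite mulr0 subr0 mulr1 oner_eq0.
apply: Dop_riordan_inv; rewrite /LS_f ?LS_g0 ?FS_f0 ?FS_f1 ?oner_eq0 //.
rewrite LS_gE FS_fE; have := lriordan_xC_subst Dn0 UE.
rewrite DnE fcompB // fcompM // fcomp_nat // fcompM // fcomp_xC => subst_b.
apply: (@mulfpsXI R); apply: oppr_inj.
by rewrite -[RHS]mulNr -subst_b; ring.
Qed.

Lemma theorem4p3_c : riordan (sdiv (@xC R) (ssub (sconst 2) (@xC R))) (@xC R) xv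
  = Dop (riordan_inv (@FS_g R) (@FS_f R) (Dop w)).
Proof.
have h0 := cterm_oppXM1addX R; set q := ssub _ _.
have qE : Fps q = 2 - c by rewrite /q Fps_ssub Fps_sconst rmorph_nat.
have Uq : Fps q \is a GRing.unit.
  by rewrite qE unit_fpsE rmorphB rmorph_nat /= cterm_xC subr0 pnatr_eq0.
apply: Dop_riordan_inv; rewrite ?FS_f0 ?FS_f1 ?oner_eq0 // FS_fE Fps_sone mul1r.
have := riordan_xC_subst Uq.
rewrite qE fcompB // fcomp_nat // fcomp_xC opprK => subst_c.
by apply: (mulrI (unit_2addX R)); rewrite -subst_c mulrC.
Qed.

Lemma theorem4p3_d :
  riordan (sdiv (@xC R) (smul (ssub (@sone R) (sscale 2 (@xC R)))
                              (ssub (sconst 2) (@xC R)))) (@xC R) xv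
  = Dop (riordan_inv (@LS_g R) (@LS_f R) (Dop w)).
Proof.
have h0 := cterm_oppXM1addX R; set q := smul _ _.
have qE : Fps q = (1 - 2 * c) * (2 - c).
  by rewrite /q Fps_smul !Fps_ssub Fps_sone Fps_sscale Fps_sconst !rmorph_nat.
have Uq : Fps q \is a GRing.unit.
  rewrite qE unit_fpsE rmorphM !rmorphB rmorphM rmorph1 !rmorph_nat /= cterm_xC.
  by rewrite mulr0 !subr0 mul1r pnatr_eq0.
apply: Dop_riordan_inv; rewrite /LS_f ?LS_g0 ?FS_f0 ?FS_f1 ?oner_eq0 //.
rewrite LS_gE FS_fE; have := riordan_xC_subst Uq.
rewrite qE fcompM // !fcompB // fcompM // !fcomp_nat // fcomp1 // fcomp_xC.
by move=> subst_d; apply: (mulrI (unit_2addX R)); rewrite -subst_d; ring.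
Qed.

End Theorem4p3.

Unset Implicit Arguments.

Theorem theorem4p3 (R : realType) (v : series R) :
  let w := riordan (@FF_g R) (@FF_f R) v in
  let x := riordan (@LF_g R) (@LF_f R) v in
  [/\ (* (a) *)
      lriordan (ssub (sconst 2) (@xC R)) (@xC R) (@xC R) w
        = Dop (riordan_inv (@FS_g R) (@FS_f R) (Dop x)),
      (* (b) *)
      lriordan (ssub (sconst 2) (@xC R))
               (ssub (@xC R) (sscale 2 (smul (@xC R) (@xC R)))) (@xC R) w
        = Dop (riordan_inv (@LS_g R) (@LS_f R) (Dop x)),
      (* (c) *)
      riordan (sdiv (@xC R) (ssub (sconst 2) (@xC R))) (@xC R) x
        = Dop (riordan_inv (@FS_g R) (@FS_f R) (Dop w))
    & (* (d) *)
      riordan (sdiv (@xC R) (smul (ssub (@sone R) (sscale 2 (@xC R)))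
                                  (ssub (sconst 2) (@xC R)))) (@xC R) x
        = Dop (riordan_inv (@LS_g R) (@LS_f R) (Dop w))].
Proof.
move=> w x; split.
- exact: theorem4p3_a.
- exact: theorem4p3_b.
- exact: theorem4p3_c.
- exact: theorem4p3_d.
Qed.
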